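(* Let $N$ be a positive integer, and let $\bar{\mathcal A}\subset\mathbb C^N\setminus\{\mathbf 0\}$ and $\bar{\mathcal B}_1\subset\mathcal H_{++}^N$ be convex and closed. Let $(\mathbf a^\star,\mathbf R_1^\star)$ be an optimal solution of the convex problem $$\min_{\mathbf a\in\bar{\mathcal A},\ \mathbf R_1\in\bar{\mathcal B}_1}\ \mathbf a^H\mathbf R_1^{-1}\mathbf a,$$ and let $\mathbf w^\star=\mathbf R_1^{\star-1}\mathbf a^\star/\|\mathbf R_1^{\star-1/2}\mathbf a^\star\|$. Then $$\mathbf w^{\star H}\mathbf a^\star\mathbf a^{\star H}\mathbf w^\star=\max_{\mathbf w\ne\mathbf 0}\ \min_{\mathbf a\in\bar{\mathcal A},\ \mathbf R_1\in\bar{\mathcal B}_1}\frac{\mathbf w^H\mathbf a\mathbf a^H\mathbf w}{\mathbf w^H\mathbf R_1\mathbf w}=\min_{\mathbf a\in\bar{\mathcal A},\ \mathbf R_1\in\bar{\mathcal B}_1}\ \max_{\mathbf w\ne\mathbf 0}\frac{\mathbf w^H\mathbf a\mathbf a^H\mathbf w}{\mathbf w^H\mathbf R_1\mathbf w}.$$ Moreover, $(\mathbf w^\star,\mathbf a^\star,\mathbf R_1^\star)$ is an optimal solution of both the maximin and the minimax problems.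
   Context: $\mathcal H_{++}^N$ is the set of $N\times N$ Hermitian positive definite matrices; $\mathbf R^{-1/2}$ is the Hermitian positive definite inverse square root; $\|\cdot\|$ is the Euclidean norm. *)

From HB Require Import structures.
From mathcomp Require Import all_boot all_order all_algebra.
From mathcomp Require Import complex.
From mathcomp Require Import boolp classical_sets reals.
Set Implicit Arguments. Unset Strict Implicit. Unset Printing Implicit Defensive.
Import Order.TTheory GRing.Theory Num.Theory.
Local Open Scope ring_scope.
Local Open Scope classical_set_scope.
Local Open Scope complex_scope.

Section Defs.
Variable R : realType.
Local Notation C := (R[i]).

Definition ctr (m n : nat) (A : 'M[C]_(m, n)) : 'M[C]_(n, m) :=
  (map_mx Num.conj A)^T.

Definition hermitian (N : nat) (A : 'M[C]_N) : Prop := ctr A = A.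

Definition hpd (N : nat) (A : 'M[C]_N) : Prop :=
  hermitian A /\ forall x : 'cV[C]_N, x != 0 -> 0 < (ctr x *m A *m x) 0 0.

Definition vnorm (N : nat) (v : 'cV[C]_N) : R :=
  Num.sqrt (\sum_(i < N) (complex.Re `|v i 0|) ^+ 2).

Definition convex_set (m n : nat) (S : set 'M[C]_(m, n)) : Prop :=
  forall x y, S x -> S y -> forall t : R, 0 <= t <= 1 ->
    S (t%:C *: x + (1 - t)%:C *: y).

Definition mx_converges (m n : nat) (u : nat -> 'M[C]_(m, n)) (l : 'M[C]_(m, n))
  : Prop :=
  forall (i : 'I_m) (j : 'I_n) (e : R), 0 < e ->
    exists M : nat, forall k, (M <= k)%N -> `|u k i j - l i j| < e%:C.

(* closedness in the Euclidean topology of C^(m x n), via sequences *)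
Definition closed_set (m n : nat) (S : set 'M[C]_(m, n)) : Prop :=
  forall (u : nat -> 'M[C]_(m, n)) l,
    (forall k, S (u k)) -> mx_converges u l -> S l.

Definition gain_ratio (N : nat) (w a : 'cV[C]_N) (R1 : 'M[C]_N) : R :=
  complex.Re (((ctr w *m a *m ctr a *m w) 0 0) / ((ctr w *m R1 *m w) 0 0)).

Definition inner_min (N : nat) (A : set 'cV[C]_N) (B : set 'M[C]_N)
  (w : 'cV[C]_N) : R :=
  inf [set r | exists a R1, A a /\ B R1 /\ r = gain_ratio w a R1].

Definition inner_max (N : nat) (a : 'cV[C]_N) (R1 : 'M[C]_N) : R :=
  sup [set r | exists w : 'cV[C]_N, w != 0 /\ r = gain_ratio w a R1].

Definition maximin_value (N : nat) (A : set 'cV[C]_N) (B : set 'M[C]_N) : R :=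
  sup [set r | exists w : 'cV[C]_N, w != 0 /\ r = inner_min A B w].

Definition minimax_value (N : nat) (A : set 'cV[C]_N) (B : set 'M[C]_N) : R :=
  inf [set r | exists a R1, A a /\ B R1 /\ r = inner_max a R1].

End Defs.

From Pilot Require Import Defs.
From HB Require Import structures.
From mathcomp Require Import all_boot all_order all_algebra.
From mathcomp Require Import complex.
From mathcomp Require Import boolp classical_sets reals.
From mathcomp Require Import ring lra.
Import Order.TTheory GRing.Theory Num.Theory.
Local Open Scope ring_scope.
Local Open Scope classical_set_scope.
Local Open Scope complex_scope.

(* Write q = a*^H R*^-1 a* and u = R*^-1 a*.  By Cauchy-Schwarz in the
   R-inner product, |w^H a|^2 / w^H R w <= a^H R^-1 a with equality at
   w = R^-1 a, so the inner maximum is a^H R^-1 a and the minimax value is q.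
   Since a^H R^-1 a = max_z (2 Re z^H a - z^H R z) is a maximum of functions
   affine in (a, R), optimality of the pair a*, R* along the segment towards
   any feasible (a, R) yields the first-order condition
   2 Re u^H a - u^H R u >= q, and AM-GM then gives |u^H a|^2 / u^H R u >= q.
   Hence the inner minimum at w* (a multiple of u) is q, and the maximin
   value, bounded by the minimax value, is q as well. *)

Section ComplexRe.
Set Implicit Arguments.
Unset Strict Implicit.
Variable R : realType.
Implicit Types x : R[i].

Lemma Re_realM (c : R) x : complex.Re (c%:C * x) = c * complex.Re x.
Proof. by case: x => a b /=; rewrite mul0r subr0. Qed.

Lemma Re_conjc x : complex.Re (Num.conj x) = complex.Re x.
Proof. by case: x. Qed.

Lemma conj_realC (c : R) : Num.conj c%:C = c%:C.
Proof. exact: conjc_real. Qed.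

Definition sqmod x : R := complex.Re x ^+ 2 + complex.Im x ^+ 2.

Lemma mul_conjc x : x * Num.conj x = (sqmod x)%:C.
Proof.
by case: x => a b; rewrite /sqmod /=; simpc; rewrite !expr2 [b * a]mulrC addNr.
Qed.

Lemma sqmod_ge0 x : 0 <= sqmod x.
Proof. by rewrite addr_ge0 ?sqr_ge0. Qed.

Lemma sqr_Re_le_sqmod x : complex.Re x ^+ 2 <= sqmod x.
Proof. by rewrite lerDl sqr_ge0. Qed.

Lemma sqmod_realM (c : R) x : sqmod (c%:C * x) = c ^+ 2 * sqmod x.
Proof.
by case: x => a b; rewrite /sqmod /=; simpc; rewrite /= !exprMn; ring.
Qed.

End ComplexRe.

Lemma sup_eq_max (R : realType) (E : set R) r : E r -> ubound E r -> sup E = r.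
Proof.
move=> Er ubr; apply/le_anti; rewrite ge_sup //=; last by exists r.
by apply: ub_le_sup => //; exists r.
Qed.

Lemma inf_eq_min (R : realType) (E : set R) r : E r -> lbound E r -> inf E = r.
Proof.
move=> Er lbr; apply/le_anti; rewrite lb_le_inf ?andbT //; last by exists r.
by apply: ge_inf => //; exists r.
Qed.

Lemma le0_of_interpolation (R : realFieldType) (d K : R) :
  (forall t, 0 < t < 1 -> (1 - t) * d <= t * K) -> d <= 0.
Proof.
move=> h; rewrite leNgt; apply/negP => d0; have K0 := normr_ge0 K.
have dK : 0 < d + `|K| by lra.
set t := d / (2 * (d + `|K|)).
have tE : t * (d + `|K|) = d / 2 by rewrite /t; field; rewrite gt_eqF.
have t0 : 0 < t by rewrite divr_gt0 // mulr_gt0.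
have t1 : t < 1 by rewrite -(ltr_pM2r dK) mul1r tE; lra.
have := h t; rewrite t0 t1 => /(_ isT).
have := ler_wpM2l (ltW t0) (ler_norm K); lra.
Qed.

Lemma amgm_mul_le_sqr (R : realFieldType) (q r x : R) :
  0 < q -> 0 < r -> q <= 2 * x - r -> q * r <= x ^+ 2.
Proof. by move=> q0 r0 h; have := sqr_ge0 (q - r); nra. Qed.

Section ConjTranspose.
Set Implicit Arguments.
Unset Strict Implicit.
Variable R : realType.
Implicit Types c : R[i].

Lemma ctrE m n (A : 'M[R[i]]_(m, n)) i j : ctr A i j = Num.conj (A j i).
Proof. by rewrite !mxE. Qed.

Lemma ctrK m n (A : 'M[R[i]]_(m, n)) : ctr (ctr A) = A.
Proof. by apply/matrixP => i j; rewrite !ctrE conjCK. Qed.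

Lemma ctrM m n p (A : 'M[R[i]]_(m, n)) (B : 'M_(n, p)) :
  ctr (A *m B) = ctr B *m ctr A.
Proof. by rewrite /ctr map_mxM trmx_mul. Qed.

Lemma ctrZ m n c (A : 'M[R[i]]_(m, n)) : ctr (c *: A) = Num.conj c *: ctr A.
Proof. by apply/matrixP => i j; rewrite !(ctrE, mxE) rmorphM. Qed.

Lemma ctr0 m n : ctr (0 : 'M[R[i]]_(m, n)) = 0.
Proof. by rewrite /ctr map_mx0 trmx0. Qed.

End ConjTranspose.

Section Forms.
Set Implicit Arguments.
Unset Strict Implicit.
Variables (R : realType) (N : nat).
Local Notation C := R[i].
Local Notation V := 'cV[C]_N.
Local Notation M := 'M[C]_N.
Implicit Types (x y z a b : V) (H : M).

Definition dot x y : C := (ctr x *m y) 0 0.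
Definition rdot x y : R := complex.Re (dot x y).
Definition qform H x : R := rdot x (H *m x).
Definition invform H a : R := qform (invmx H) a.

Lemma dot_conj x y : Num.conj (dot x y) = dot y x.
Proof. by rewrite /dot -ctrE ctrM ctrK. Qed.

Lemma dotZl c x y : dot (c *: x) y = Num.conj c * dot x y.
Proof. by rewrite /dot ctrZ -scalemxAl mxE. Qed.

Lemma dotZr c x y : dot x (c *: y) = c * dot x y.
Proof. by rewrite /dot -scalemxAr mxE. Qed.

Lemma dot_mulmxl (A : M) x y : dot (A *m x) y = dot x (ctr A *m y).
Proof. by rewrite /dot ctrM mulmxA. Qed.

Lemma rdotC x y : rdot x y = rdot y x.
Proof. by rewrite /rdot -dot_conj Re_conjc. Qed.

Lemma rdotDr x y z : rdot x (y + z) = rdot x y + rdot x z.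
Proof. by rewrite /rdot /dot mulmxDr mxE raddfD. Qed.

Lemma rdotNr x y : rdot x (- y) = - rdot x y.
Proof. by rewrite /rdot /dot mulmxN [(- _ : 'M_1) 0 0]mxE raddfN. Qed.

Lemma rdotBr x y z : rdot x (y - z) = rdot x y - rdot x z.
Proof. by rewrite rdotDr rdotNr. Qed.

Lemma rdotZr (c : R) x y : rdot x (c%:C *: y) = c * rdot x y.
Proof. by rewrite /rdot dotZr Re_realM. Qed.

Lemma rdotDl x y z : rdot (x + y) z = rdot x z + rdot y z.
Proof. by rewrite rdotC rdotDr !(rdotC z). Qed.

Lemma rdotBl x y z : rdot (x - y) z = rdot x z - rdot y z.
Proof. by rewrite rdotC rdotBr !(rdotC z). Qed.

Lemma rdotZl (c : R) x y : rdot (c%:C *: x) y = c * rdot x y.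
Proof. by rewrite rdotC rdotZr rdotC. Qed.

Lemma rdotx0 x : rdot x 0 = 0.
Proof. by rewrite /rdot /dot mulmx0 mxE. Qed.

Lemma rdot_hermitian H x y :
  Defs.hermitian H -> rdot x (H *m y) = rdot y (H *m x).
Proof. by move=> hH; rewrite rdotC /rdot dot_mulmxl [ctr H]hH. Qed.

Lemma qformZ H (c : R) x : qform H (c%:C *: x) = c ^+ 2 * qform H x.
Proof. by rewrite /qform -scalemxAr rdotZl rdotZr mulrA -expr2. Qed.

Lemma hpd_hermitian H : hpd H -> Defs.hermitian H.
Proof. by case. Qed.

Lemma hpd_dot_gt0 H x : hpd H -> x != 0 -> 0 < dot x (H *m x).
Proof. by case=> _ hpos /hpos; rewrite /dot mulmxA. Qed.

Lemma hpd_dot_real H x : hpd H -> dot x (H *m x) = (qform H x)%:C.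
Proof.
move=> hH; have [->|x0] := eqVneq x 0.
  by rewrite /qform mulmx0 rdotx0 /dot mulmx0 mxE.
have := hpd_dot_gt0 hH x0; rewrite ltcE => /andP[/eqP Im0 _].
by rewrite /qform /rdot; move: Im0; case: (dot x (H *m x)) => a b /= ->.
Qed.

Lemma qform_gt0 H x : hpd H -> x != 0 -> 0 < qform H x.
Proof.
by move=> hH x0; have := hpd_dot_gt0 hH x0; rewrite hpd_dot_real // ltcR.
Qed.

Lemma qform_ge0 H x : hpd H -> 0 <= qform H x.
Proof.
move=> hH; have [->|x0] := eqVneq x 0; last exact/ltW/qform_gt0.
by rewrite /qform mulmx0 rdotx0.
Qed.

Lemma hpd_unitmx H : hpd H -> H \in unitmx.
Proof.
move=> hH; apply: contraT => Hn.
have : kermx H != 0 by rewrite kermx_eq0 row_free_unit.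
case/rowV0Pn => v /sub_kermxP vH v0.
have cv0 : ctr v != 0 by apply: contra v0 => /eqP cv; rewrite -(ctrK v) cv ctr0.
have := hpd_dot_gt0 hH cv0.
by rewrite -(hpd_hermitian hH) -ctrM vH ctr0 /dot mulmx0 mxE ltxx.
Qed.

Lemma hpd_invmx_neq0 H a : hpd H -> a != 0 -> invmx H *m a != 0.
Proof.
move=> hH; apply: contra => /eqP Ha0.
by rewrite -[a](mulKVmx (hpd_unitmx hH)) Ha0 mulmx0.
Qed.

Lemma invform_gt0 H a : hpd H -> a != 0 -> 0 < invform H a.
Proof.
move=> hH a0; have HU := hpd_unitmx hH.
rewrite /invform /qform rdotC -{2}[a](mulKVmx HU).
exact/qform_gt0/hpd_invmx_neq0.
Qed.

Lemma qform_invmx H a : hpd H -> qform H (invmx H *m a) = invform H a.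
Proof. by move=> hH; rewrite /qform mulKVmx ?hpd_unitmx // rdotC. Qed.

(* [invform H a] is the maximum over [z] of [minorant a H z], attained at
   [z = H^-1 a]; each minorant is affine in [(a, H)] (see [minorant_comb]),
   which is where the joint convexity of [invform] comes from. *)
Definition minorant a H z : R := 2 * rdot z a - qform H z.

Lemma minorant_complete H a z : hpd H ->
  minorant a H z = invform H a - qform H (z - invmx H *m a).
Proof.
move=> hH; have Hm : H *m (invmx H *m a) = a by rewrite mulKVmx ?hpd_unitmx.
rewrite /minorant /invform /qform mulmxBr Hm !(rdotBl, rdotBr).
rewrite (rdot_hermitian (invmx H *m a) z (hpd_hermitian hH)) Hm.
rewrite (rdotC (invmx H *m a) a).
ring.
Qed.

Lemma minorant_le_invform H a z : hpd H -> minorant a H z <= invform H a.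
Proof. by move=> hH; rewrite minorant_complete // lerBlDr lerDl qform_ge0. Qed.

Lemma minorant_invmx H a : hpd H -> minorant a H (invmx H *m a) = invform H a.
Proof.
by move=> hH; rewrite minorant_complete // subrr /qform mulmx0 rdotx0 subr0.
Qed.

Lemma minorant_comb (t : R) a a' H H' z :
  minorant (t%:C *: a + (1 - t)%:C *: a') (t%:C *: H + (1 - t)%:C *: H') z =
    t * minorant a H z + (1 - t) * minorant a' H' z.
Proof.
rewrite /minorant /qform mulmxDl -!scalemxAl !(rdotDr, rdotZr).
ring.
Qed.

Lemma minorant_shift H a (u y : V) : Defs.hermitian H ->
  minorant a H (u + y) = minorant a H u + 2 * rdot y (a - H *m u) - qform H y.
Proof.
move=> hH; rewrite /minorant /qform mulmxDr !(rdotDl, rdotDr, rdotNr).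
rewrite (rdot_hermitian u y hH).
ring.
Qed.

Lemma young_rdot H (s t : R) y b : hpd H ->
  2 * s * t * rdot y b <= s ^+ 2 * qform H y + t ^+ 2 * invform H b.
Proof.
move=> hH; have := minorant_le_invform (t%:C *: b) (s%:C *: y) hH.
rewrite /minorant /invform !qformZ rdotZl rdotZr.
lra.
Qed.

Lemma gain_ratio_num w a :
  (ctr w *m a *m ctr a *m w) 0 0 = (sqmod (dot w a))%:C.
Proof. by rewrite -mul_conjc dot_conj -mulmxA [LHS]mxE big_ord1. Qed.

Lemma gain_ratioE H w a : hpd H ->
  gain_ratio w a H = sqmod (dot w a) / qform H w.
Proof.
move=> hH; rewrite /gain_ratio gain_ratio_num -mulmxA.
by rewrite -/(dot w (H *m w)) hpd_dot_real // -fmorph_div.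
Qed.

Lemma gain_ratio_ge0 H w a : hpd H -> 0 <= gain_ratio w a H.
Proof. by move=> hH; rewrite gain_ratioE // divr_ge0 ?sqmod_ge0 ?qform_ge0. Qed.

Lemma gain_ratioZ H (c : R) w a : hpd H -> c != 0 ->
  gain_ratio (c%:C *: w) a H = gain_ratio w a H.
Proof.
move=> hH c0; rewrite !gain_ratioE // dotZl conj_realC sqmod_realM qformZ.
have [->|w0] := eqVneq w 0.
  by rewrite /qform mulmx0 rdotx0 !(mulr0, invr0).
by field; rewrite gt_eqF ?qform_gt0 // c0.
Qed.

(* Cauchy-Schwarz: at the best complex multiple [l *: w] of [w], the minorant
   equals the gain ratio. *)
Lemma gain_ratio_le_invform H w a : hpd H -> w != 0 ->
  gain_ratio w a H <= invform H a.
Proof.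
move=> hH w0; set c := dot w a; set p := qform H w.
have pC0 : p%:C != 0 by rewrite eq_complex /= negb_and gt_eqF ?qform_gt0.
set l := c / p%:C.
have conj_l_c : Num.conj l * c = (sqmod c / p)%:C.
  rewrite fmorph_div /= conj_realC mulrAC [Num.conj c * c]mulrC mul_conjc.
  by rewrite -fmorph_div.
have qform_lw : qform H (l *: w) = complex.Re (Num.conj l * c).
  by rewrite /qform /rdot -scalemxAr dotZl dotZr hpd_dot_real // -/p mulfVK.
suff <- : minorant a H (l *: w) = gain_ratio w a H.
  exact: minorant_le_invform.
by rewrite gain_ratioE // /minorant qform_lw /rdot dotZl -/c conj_l_c /=; ring.
Qed.

Lemma gain_ratio_invmx H a : hpd H -> a != 0 ->
  gain_ratio (invmx H *m a) a H = invform H a.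
Proof.
move=> hH a0; set m := invmx H *m a.
have Hm : H *m m = a by rewrite mulKVmx ?hpd_unitmx.
have qm : qform H m = invform H a by exact: qform_invmx.
have dm : dot m a = (invform H a)%:C.
  by rewrite -[in dot m a]Hm hpd_dot_real // qm.
rewrite gain_ratioE // dm qm /sqmod /= expr0n addr0 expr2 mulfK //.
by rewrite gt_eqF ?invform_gt0.
Qed.

Lemma vnorm_sqr x : vnorm x ^+ 2 = rdot x x.
Proof.
rewrite /rdot /dot mxE (eq_bigr (fun i => (sqmod (x i 0))%:C)); last first.
  by move=> i _; rewrite ctrE mulrC mul_conjc.
have sum_ge0 : 0 <= \sum_i complex.Re `|x i 0| ^+ 2.
  by apply: sumr_ge0 => i _; exact: sqr_ge0.
rewrite -rmorph_sum /= /vnorm sqr_sqrtr //.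
by apply: eq_bigr => i _; rewrite normc_def /= sqr_sqrtr // sqmod_ge0.
Qed.

Lemma vnorm_sqrt_invform (S H : M) a : hpd S -> S *m S = invmx H ->
  vnorm (S *m a) ^+ 2 = invform H a.
Proof.
move=> hS hS2; rewrite vnorm_sqr /rdot dot_mulmxl [ctr S](hpd_hermitian hS).
by rewrite mulmxA hS2.
Qed.

Lemma inner_max_eq H a : hpd H -> a != 0 -> inner_max a H = invform H a.
Proof.
move=> hH a0; apply: sup_eq_max.
  by exists (invmx H *m a); rewrite gain_ratio_invmx // hpd_invmx_neq0.
by move=> r [w [w0 ->]]; exact: gain_ratio_le_invform.
Qed.

Lemma inner_min_scale (A : set V) (B : set M) (c : R) w :
  (forall H, B H -> hpd H) -> c != 0 ->
  inner_min A B (c%:C *: w) = inner_min A B w.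
Proof.
move=> hB c0; rewrite /inner_min; congr inf.
apply/seteqP; split=> r [a [H [ha [hH ->]]]]; exists a, H.
  by rewrite (gain_ratioZ w a (hB _ hH) c0).
by rewrite (gain_ratioZ w a (hB _ hH) c0).
Qed.

End Forms.

Section SaddlePoint.
Set Implicit Arguments.
Unset Strict Implicit.
Variables (R : realType) (N : nat).
Local Notation V := 'cV[R[i]]_N.
Local Notation M := 'M[R[i]]_N.
Variables (A : set V) (B : set M) (astar : V) (Rs : M).
Hypotheses (hA0 : forall a, A a -> a != 0) (hAconv : convex_set A)
  (hBhpd : forall H, B H -> hpd H) (hBconv : convex_set B)
  (hastar : A astar) (hRs : B Rs)
  (hopt : forall a H, A a -> B H -> invform Rs astar <= invform H a).

Local Notation u := (invmx Rs *m astar).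
Local Notation q := (invform Rs astar).

(* Optimality of [(astar, Rs)] against the interpolated point, read off the
   minorant at its maximizer [z = u + y]; [young_rdot] absorbs the cross term
   [2 Re y^H b] at the price of [t * invform Rs b]. *)
Lemma first_order_approx a H t : A a -> B H -> 0 < t < 1 ->
  (1 - t) * (q - minorant a H u) <= t * invform Rs (a - H *m u).
Proof.
move=> ha hH /andP[t0 t1]; have t01 : 0 <= t <= 1 by rewrite !ltW.
have hHp := hBhpd hH; have hRsp := hBhpd hRs.
set z := invmx (t%:C *: H + (1 - t)%:C *: Rs) *m
          (t%:C *: a + (1 - t)%:C *: astar).
set y := z - u; set b := a - H *m u.
have opt_t : q <= t * minorant a H z + (1 - t) * minorant astar Rs z.
  rewrite -minorant_comb minorant_invmx; last exact: hBhpd (hBconv hH hRs t01).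
  exact: hopt (hAconv ha hastar t01) (hBconv hH hRs t01).
have star_z : minorant astar Rs z = q - qform Rs y by exact: minorant_complete.
have a_z : minorant a H z = minorant a H u + 2 * rdot y b - qform H y.
  by rewrite -(minorant_shift a u y (hpd_hermitian hHp)) /y addrC subrK.
have Y0 : 0 <= t * qform H y by rewrite mulr_ge0 ?qform_ge0 ?ltW.
have young := young_rdot (1 - t) t y b hRsp.
rewrite star_z a_z in opt_t.
have h1 : t * (q - minorant a H u) <= 2 * t * rdot y b - (1 - t) * qform Rs y.
  by lra.
have h2 : t * ((1 - t) * (q - minorant a H u)) <= t * (t * invform Rs b).
  have t1' : 0 <= 1 - t by rewrite subr_ge0 ltW.
  by have := ler_wpM2l t1' h1; lra.
by rewrite ler_pM2l in h2.
Qed.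

Lemma first_order_optimality a H : A a -> B H -> q <= minorant a H u.
Proof.
move=> ha hH; rewrite -subr_le0.
apply: (@le0_of_interpolation _ _ (invform Rs (a - H *m u))) => t.
exact: first_order_approx.
Qed.

Lemma invform_opt_le_gain a H : A a -> B H -> q <= gain_ratio u a H.
Proof.
move=> ha hH; have hHp := hBhpd hH; have hRsp := hBhpd hRs.
have r0 : 0 < qform H u by exact/qform_gt0/hpd_invmx_neq0/hA0.
rewrite gain_ratioE // ler_pdivlMr //; apply: le_trans (sqr_Re_le_sqmod _).
apply: amgm_mul_le_sqr r0 _; first exact/invform_gt0/hA0.
exact: first_order_optimality.
Qed.

Lemma inner_min_opt : inner_min A B u = q.
Proof.
apply: inf_eq_min.
  by exists astar, Rs; rewrite (gain_ratio_invmx (hBhpd hRs) (hA0 hastar)).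
by move=> r [a [H [ha [hH ->]]]]; exact: invform_opt_le_gain.
Qed.

Lemma inner_min_le_opt (w : V) : w != 0 -> inner_min A B w <= q.
Proof.
move=> w0; apply: le_trans (gain_ratio_le_invform astar (hBhpd hRs) w0).
apply: ge_inf; last by exists astar, Rs.
by exists 0 => r [a [H [_ [hH ->]]]]; exact/gain_ratio_ge0/hBhpd.
Qed.

Lemma maximin_value_eq : maximin_value A B = q.
Proof.
apply: sup_eq_max; last by move=> r [w [w0 ->]]; exact: inner_min_le_opt.
by exists u; rewrite inner_min_opt (hpd_invmx_neq0 (hBhpd hRs) (hA0 hastar)).
Qed.

Lemma minimax_value_eq : minimax_value A B = q.
Proof.
apply: inf_eq_min.
  by exists astar, Rs; rewrite (inner_max_eq (hBhpd hRs) (hA0 hastar)).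
move=> r [a [H [ha [hH ->]]]].
by rewrite (inner_max_eq (hBhpd hH) (hA0 ha)); exact: hopt.
Qed.

End SaddlePoint.

Theorem corollary1 (R : realType) (N : nat) (hN : (0 < N)%N)
  (A : set 'cV[complex R]_N) (B : set 'M[complex R]_N)
  (hA0 : forall a, A a -> a != 0)
  (hAconv : convex_set A) (hAclosed : closed_set A)
  (hBhpd : forall R1, B R1 -> hpd R1)
  (hBconv : convex_set B) (hBclosed : closed_set B)
  (astar : 'cV[complex R]_N) (R1star : 'M[complex R]_N)
  (hastar : A astar) (hR1star : B R1star)
  (hopt : forall a R1, A a -> B R1 ->
     complex.Re ((ctr astar *m invmx R1star *m astar) 0 0)
       <= complex.Re ((ctr a *m invmx R1 *m a) 0 0))
  (S : 'M[complex R]_N) (hS : hpd S) (hS2 : S *m S = invmx R1star)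
  (wstar : 'cV[complex R]_N)
  (hwstar : wstar = ((vnorm (S *m astar))^-1)%:C *: (invmx R1star *m astar)) :
  let v := complex.Re ((ctr wstar *m astar *m ctr astar *m wstar) 0 0) in
  (* the two values *)
  v = maximin_value A B /\ v = minimax_value A B /\
  (* (wstar, astar, R1star) solves the maximin problem *)
  wstar != 0 /\
  (forall a R1, A a -> B R1 -> gain_ratio wstar astar R1star <= gain_ratio wstar a R1) /\
  inner_min A B wstar = gain_ratio wstar astar R1star /\
  (forall w, w != 0 -> inner_min A B w <= inner_min A B wstar) /\
  maximin_value A B = inner_min A B wstar /\
  (* (wstar, astar, R1star) solves the minimax problem *)
  (forall w, w != 0 -> gain_ratio w astar R1star <= gain_ratio wstar astar R1star) /\
  inner_max astar R1star = gain_ratio wstar astar R1star /\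
  (forall a R1, A a -> B R1 -> inner_max astar R1star <= inner_max a R1) /\
  minimax_value A B = inner_max astar R1star /\
  v = gain_ratio wstar astar R1star.
Proof.
move=> v; have hRs := hBhpd _ hR1star; have astar0 := hA0 _ hastar.
have {}hopt a R1 : A a -> B R1 -> invform R1star astar <= invform R1 a.
  by move=> ha hR1; rewrite /invform /qform /rdot /dot !mulmxA; exact: hopt.
set q := invform R1star astar in hopt *.
have nv0 : vnorm (S *m astar) != 0.
  by rewrite -sqrf_eq0 (vnorm_sqrt_invform _ hS hS2) gt_eqF ?invform_gt0.
have gain_ws a H :
    B H -> gain_ratio wstar a H = gain_ratio (invmx R1star *m astar) a H.
  by move=> hH; rewrite hwstar (gain_ratioZ _ _ (hBhpd _ hH)) // invr_eq0.
have qform_ws : qform R1star wstar = 1.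
  rewrite hwstar qformZ qform_invmx // exprVn (vnorm_sqrt_invform _ hS hS2).
  by rewrite mulVf // gt_eqF ?invform_gt0.
have gain_opt : gain_ratio (invmx R1star *m astar) astar R1star = q.
  exact: gain_ratio_invmx.
have v_eq : v = gain_ratio wstar astar R1star.
  by rewrite /v gain_ratio_num gain_ratioE // qform_ws divr1.
have imin : inner_min A B wstar = q.
  rewrite hwstar inner_min_scale ?invr_eq0 //.
  exact: (inner_min_opt hA0 hAconv hBhpd hBconv hastar hR1star hopt).
rewrite v_eq gain_ws // gain_opt imin (inner_max_eq hRs astar0).
rewrite (maximin_value_eq hA0 hAconv hBhpd hBconv hastar hR1star hopt).
rewrite (minimax_value_eq hA0 hBhpd hastar hR1star hopt).
repeat split => //.
- rewrite hwstar scaler_eq0 negb_or eq_complex /= negb_and invr_eq0 nv0.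
  exact: hpd_invmx_neq0.
- move=> a H ha hH; rewrite gain_ws //.
  exact: (invform_opt_le_gain hA0 hAconv hBhpd hBconv hastar hR1star hopt).
- exact: (inner_min_le_opt hBhpd hastar hR1star).
- by move=> w w0; exact: gain_ratio_le_invform.
- move=> a H ha hH.
  by rewrite (inner_max_eq (hBhpd _ hH) (hA0 _ ha)); exact: hopt.
Qed.
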